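(* Let $p\ge0$, $(\kappa_i)$ with $C^{-1}i^{-p}\le\kappa_i\le Ci^{-p}$, $\mu_0\in\ell_2$, and constants $0<l<L$. Define \[ h_n(\alpha)=\frac{1+2\alpha+2p}{n^{1/(1+2\alpha+2p)}\log n}\sum_{i=1}^{\infty}\frac{n^2 i^{1+2\alpha}\mu_{0,i}^2\log i}{(i^{1+2\alpha}\kappa_i^{-2}+n)^2}, \] $\underline{\alpha}_n=\inf\{\alpha>0:h_n(\alpha)>l\}\wedge\sqrt{\log n}$ and $\overline{\alpha}_n=\inf\{\alpha>0:h_n(\alpha)>L(\log n)^2\}$. Then, with constants not depending on $n$, $\alpha$ or $\mu_0$, \[ h_n(\alpha)\gtrsim h_n(\overline{\alpha}_n)\quad\text{for }\alpha\in\Big[\overline{\alpha}_n-\frac1{\log n},\overline{\alpha}_n\Big]\text{ and }n\ge e^4, \] \[ h_n(\alpha)\lesssim h_n(\underline{\alpha}_n)\quad\text{for }\alpha\in\Big[\underline{\alpha}_n,\underline{\alpha}_n+\frac1{\log n}\Big]\text{ and }n\ge e^2. \]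
   Context: $a\lesssim b$ means $a\le Kb$ for a constant $K>0$; $a\gtrsim b$ means $b\lesssim a$. Infimum of the empty set is $+\infty$. *)

From Stdlib Require Import Reals Lra.
From Coquelicot Require Import Coquelicot.
Open Scope R_scope.

(* The i-th summand of h_n(alpha), for i >= 1 (sequences kappa, mu0 are
   indexed from 1; the value at index 0 is ignored). *)
Definition h_term (kappa mu0 : nat -> R) (n alpha : R) (i : nat) : R :=
  let x := INR i in
  n ^ 2 * Rpower x (1 + 2 * alpha) * (mu0 i) ^ 2 * ln x
  / (Rpower x (1 + 2 * alpha) * / (kappa i) ^ 2 + n) ^ 2.

Definition h_n (p : R) (kappa mu0 : nat -> R) (n alpha : R) : R :=
  (1 + 2 * alpha + 2 * p) / (Rpower n (1 / (1 + 2 * alpha + 2 * p)) * ln n)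
  * Series (fun k => h_term kappa mu0 n alpha (S k)).

(* Infimum in extended reals; Glb_Rbar of the empty set is p_infty. *)
Definition alpha_low (p : R) (kappa mu0 : nat -> R) (l n : R) : R :=
  real (Rbar_min (Glb_Rbar (fun a => 0 < a /\ h_n p kappa mu0 n a > l))
                 (Finite (sqrt (ln n)))).

Definition alpha_up (p : R) (kappa mu0 : nat -> R) (L n : R) : Rbar :=
  Glb_Rbar (fun a => 0 < a /\ h_n p kappa mu0 n a > L * (ln n) ^ 2).

From Stdlib Require Import Reals Lra Lia Psatz.
From Coquelicot Require Import Coquelicot.
Open Scope R_scope.

(* Write X = i^(1+2a) and c = kappa_i^-2, so that the i-th term of h_n(a) is
   N^2 mu_i^2 log i * X/(Xc + N)^2.  Raising a by d <= 1/log N multiplies X by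
   i^(2d).  If Xc >= N the map X |-> X/(Xc + N)^2 is already decreasing, so the
   term does not grow; if Xc < N then i^(1+2a+2p) < C^2 N, so i^(2d) is bounded
   by a constant and the term grows at most by that factor.  The prefactor
   (1+2a+2p)/(N^(1/(1+2a+2p)) log N) also changes by a bounded factor, so
   h_n(a+d) <~ h_n(a) uniformly for a >= -1/4, which covers both windows. *)

Lemma exp_le_compat (x y : R) : x <= y -> exp x <= exp y.
Proof.
  intros hxy; destruct (Rle_lt_or_eq_dec x y hxy) as [hlt | ->]; [|lra].
  now left; apply exp_increasing.
Qed.

Lemma Rpower_gt0 (x y : R) : 0 < Rpower x y.
Proof. apply exp_pos. Qed.

Lemma Series_ge0 (a : nat -> R) : (forall k, 0 <= a k) -> ex_series a -> 0 <= Series a.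
Proof.
  intros ha hex.
  assert (Hzero : Series (fun _ => 0) = 0).
  { rewrite (Series_ext _ (fun _ => 0 * 0)) by (intro; ring).
    rewrite Series_scal_l; ring. }
  rewrite <- Hzero; apply Series_le; [|exact hex].
  intro k; split; [lra | apply ha].
Qed.

Definition weight (X c N : R) : R := X / (X * c + N) ^ 2.

Section Weight.
Variables (c N : R).
Hypotheses (hc : 0 < c) (hN : 0 < N).

Lemma weight_ge0 (X : R) : 0 < X -> 0 <= weight X c N.
Proof.
  intros hX; apply Rdiv_le_0_compat; [lra | apply pow_lt; nra].
Qed.

Lemma weight_le_scaled (X0 X1 : R) : 0 < X0 -> X0 <= X1 ->
  weight X1 c N <= weight X0 c N * (X1 / X0).
Proof.
  intros hX0 hX01; unfold weight.
  replace (X0 / (X0 * c + N) ^ 2 * (X1 / X0)) with (X1 / (X0 * c + N) ^ 2)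
    by (field; nra).
  apply Rmult_le_compat_l; [lra|].
  apply Rinv_le_contravar; [apply pow_lt; nra|].
  apply pow_incr; nra.
Qed.

Lemma weight_antitone (X0 X1 : R) : 0 < X0 -> X0 <= X1 -> N <= X0 * c ->
  weight X1 c N <= weight X0 c N.
Proof.
  intros hX0 hX01 hlarge; unfold weight.
  assert (hcross : X1 * (X0 * c + N) ^ 2 <= X0 * (X1 * c + N) ^ 2).
  { assert (X0 * (X1 * c + N) ^ 2 - X1 * (X0 * c + N) ^ 2
            = (X1 - X0) * (X0 * X1 * c ^ 2 - N ^ 2)) by ring.
    assert (0 <= (X1 - X0) * (X0 * X1 * c ^ 2 - N ^ 2)); [|lra].
    apply Rmult_le_pos; [lra|].
    assert (N <= X1 * c) by nra; nra. }
  apply Rmult_le_reg_r with ((X0 * c + N) ^ 2 * (X1 * c + N) ^ 2);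
    [apply Rmult_lt_0_compat; apply pow_lt; nra|].
  replace (X1 / (X1 * c + N) ^ 2 * ((X0 * c + N) ^ 2 * (X1 * c + N) ^ 2))
    with (X1 * (X0 * c + N) ^ 2) by (field; nra).
  replace (X0 / (X0 * c + N) ^ 2 * ((X0 * c + N) ^ 2 * (X1 * c + N) ^ 2))
    with (X0 * (X1 * c + N) ^ 2) by (field; nra).
  exact hcross.
Qed.

Lemma weight_le_inv (X : R) : 0 < X -> X * weight X c N <= / c ^ 2.
Proof.
  intros hX; unfold weight.
  replace (/ c ^ 2) with (X * (X / (X * c) ^ 2)) by (field; lra).
  apply Rmult_le_compat_l; [lra|].
  apply Rmult_le_compat_l; [lra|].
  apply Rinv_le_contravar; [apply pow_lt; nra | apply pow_incr; nra].
Qed.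

End Weight.

Lemma h_term_weight (kappa mu0 : nat -> R) (N a : R) (i : nat) :
  h_term kappa mu0 N a i =
  N ^ 2 * mu0 i ^ 2 * ln (INR i)
  * weight (Rpower (INR i) (1 + 2 * a)) (/ kappa i ^ 2) N.
Proof. unfold h_term, weight, Rdiv; simpl; ring. Qed.

Definition prefactor (N s : R) : R := s / (Rpower N (1 / s) * ln N).

Lemma h_n_prefactor (p : R) (kappa mu0 : nat -> R) (N a : R) :
  h_n p kappa mu0 N a =
  prefactor N (1 + 2 * a + 2 * p) * Series (fun k => h_term kappa mu0 N a (S k)).
Proof. reflexivity. Qed.

Lemma prefactor_shift_le (N s d : R) :
  2 <= ln N -> 1 / 2 <= s -> 0 <= d -> d * ln N <= 1 ->
  prefactor N (s + 2 * d) <= 3 * exp 8 * prefactor N s.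
Proof.
  intros hlN hs hd hdN; unfold prefactor, Rpower.
  assert (hds : d <= s) by nra.
  set (e0 := exp (1 / s * ln N)); set (e1 := exp (1 / (s + 2 * d) * ln N)).
  assert (he0 : 0 < e0) by apply exp_pos.
  assert (he1 : 0 < e1) by apply exp_pos.
  assert (hratio : e0 <= exp 8 * e1).
  { unfold e0, e1; rewrite <- exp_plus; apply exp_le_compat.
    assert (1 / s * ln N - 1 / (s + 2 * d) * ln N
            = (2 * d * ln N) * / (s * (s + 2 * d))) by (field; lra).
    assert (/ (s * (s + 2 * d)) <= 4).
    { replace 4 with (/ (1 / 4)) by field. apply Rinv_le_contravar; nra. }
    assert (0 <= / (s * (s + 2 * d))) by (left; apply Rinv_0_lt_compat; nra).
    nra. }
  apply Rmult_le_reg_r with (e0 * e1 * ln N);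
    [apply Rmult_lt_0_compat; [nra | lra]|].
  replace ((s + 2 * d) / (e1 * ln N) * (e0 * e1 * ln N)) with ((s + 2 * d) * e0)
    by (field; lra).
  replace (3 * exp 8 * (s / (e0 * ln N)) * (e0 * e1 * ln N))
    with (3 * s * (exp 8 * e1)) by (field; lra).
  apply Rmult_le_compat; lra.
Qed.

Section Kappa.
Variables (p C : R) (kappa : nat -> R).
Hypotheses (hp : 0 <= p) (hC : 0 < C)
  (hkappa : forall i : nat, (1 <= i)%nat ->
     / C * Rpower (INR i) (- p) <= kappa i <= C * Rpower (INR i) (- p)).

Lemma kappa_gt0 (i : nat) : (1 <= i)%nat -> 0 < kappa i.
Proof.
  intros hi; apply Rlt_le_trans with (2 := proj1 (hkappa i hi)).
  apply Rmult_lt_0_compat; [apply Rinv_0_lt_compat; lra | apply Rpower_gt0].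
Qed.

Lemma kappa_le (i : nat) : (1 <= i)%nat -> kappa i <= C.
Proof.
  intros hi; pose proof (hkappa i hi) as [_ hup].
  assert (hx : 1 <= INR i) by (apply (le_INR 1); exact hi).
  assert (Rpower (INR i) (- p) <= 1).
  { rewrite <- (Rpower_O (INR i)) by lra; apply Rle_Rpower; lra. }
  pose proof (Rpower_gt0 (INR i) (- p)); nra.
Qed.

Lemma ln_kappa_le (i : nat) : (1 <= i)%nat -> ln (kappa i) <= ln C - p * ln (INR i).
Proof.
  intros hi; pose proof (kappa_gt0 i hi).
  replace (ln C - p * ln (INR i)) with (ln (C * Rpower (INR i) (- p)))
    by (rewrite ln_mult, ln_Rpower by (lra || apply Rpower_gt0); ring).
  apply ln_le; [lra | apply (hkappa i hi)].
Qed.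

Lemma h_term_ge0 (mu0 : nat -> R) (N a : R) (i : nat) : (1 <= i)%nat -> 0 < N ->
  0 <= h_term kappa mu0 N a i.
Proof.
  intros hi hN; rewrite h_term_weight.
  assert (hx : 1 <= INR i) by (apply (le_INR 1); exact hi).
  pose proof (kappa_gt0 i hi).
  apply Rmult_le_pos.
  - apply Rmult_le_pos; [apply Rmult_le_pos; apply pow2_ge_0|].
    rewrite <- ln_1; apply ln_le; lra.
  - apply weight_ge0; [apply Rinv_0_lt_compat, pow_lt; lra | lra | apply Rpower_gt0].
Qed.

Lemma h_term_le (mu0 : nat -> R) (N a : R) (i : nat) :
  (1 <= i)%nat -> 0 < N -> 1 / 2 <= 1 + 2 * a ->
  h_term kappa mu0 N a i <= 2 * C ^ 4 * N ^ 2 * mu0 i ^ 2.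
Proof.
  intros hi hN ha; rewrite h_term_weight.
  assert (hx : 1 <= INR i) by (apply (le_INR 1); exact hi).
  pose proof (kappa_gt0 i hi) as hk.
  set (X := Rpower (INR i) (1 + 2 * a)); set (c := / kappa i ^ 2).
  assert (hX : 0 < X) by apply Rpower_gt0.
  assert (hc : 0 < c) by (apply Rinv_0_lt_compat, pow_lt; lra).
  (* (1+2a) log i <= X, from 1 + y <= exp y *)
  assert (hlnX : 0 <= ln (INR i) <= 2 * X).
  { split; [rewrite <- ln_1; apply ln_le; lra|].
    pose proof (exp_ineq1_le ((1 + 2 * a) * ln (INR i))).
    assert (0 <= ln (INR i)) by (rewrite <- ln_1; apply ln_le; lra).
    unfold X, Rpower; nra. }
  assert (hw : 0 <= weight X c N) by (apply weight_ge0; lra).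
  assert (hXw : X * weight X c N <= C ^ 4).
  { apply Rle_trans with (/ c ^ 2); [apply weight_le_inv; lra|].
    replace (/ c ^ 2) with (kappa i ^ 4) by (unfold c; field; lra).
    apply pow_incr; split; [lra | apply kappa_le, hi]. }
  assert (hmu : 0 <= N ^ 2 * mu0 i ^ 2) by (apply Rmult_le_pos; apply pow2_ge_0).
  replace (2 * C ^ 4 * N ^ 2 * mu0 i ^ 2) with (N ^ 2 * mu0 i ^ 2 * (2 * C ^ 4)) by ring.
  rewrite Rmult_assoc; apply Rmult_le_compat_l; nra.
Qed.

Lemma ex_series_h_term (mu0 : nat -> R) (N a : R) :
  ex_series (fun k => mu0 (S k) ^ 2) -> 0 < N -> 1 / 2 <= 1 + 2 * a ->
  ex_series (fun k => h_term kappa mu0 N a (S k)).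
Proof.
  intros hmu hN ha.
  apply (@ex_series_le R_AbsRing R_CompleteNormedModule _
           (fun k => (2 * C ^ 4 * N ^ 2) * mu0 (S k) ^ 2)).
  - intro k; change (norm ?z) with (Rabs z).
    rewrite Rabs_pos_eq by (apply h_term_ge0; lia || lra).
    apply h_term_le; lia || lra.
  - exact (@ex_series_scal_l R_AbsRing R_NormedModule _ _ hmu).
Qed.

Lemma ln_index_lt (N a : R) (i : nat) : (1 <= i)%nat -> 0 < N ->
  Rpower (INR i) (1 + 2 * a) * / kappa i ^ 2 < N ->
  (1 + 2 * a + 2 * p) * ln (INR i) < ln N + 2 * ln C.
Proof.
  intros hi hN hsmall.
  assert (hx : 1 <= INR i) by (apply (le_INR 1); exact hi).
  pose proof (kappa_gt0 i hi) as hk.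
  pose proof (ln_kappa_le i hi).
  apply ln_increasing in hsmall;
    [|apply Rmult_lt_0_compat; [apply Rpower_gt0 | apply Rinv_0_lt_compat, pow_lt; lra]].
  rewrite ln_mult, ln_Rpower, ln_Rinv, ln_pow in hsmall
    by (apply Rpower_gt0 || apply pow_lt || apply Rinv_0_lt_compat, pow_lt || idtac; lra).
  simpl INR in hsmall; lra.
Qed.

Lemma h_term_shift_le (mu0 : nat -> R) (N a d : R) (i : nat) :
  (1 <= i)%nat -> 0 < N -> 2 <= ln N -> 0 <= d -> d * ln N <= 1 ->
  1 / 2 <= 1 + 2 * a + 2 * p ->
  h_term kappa mu0 N (a + d) i <= exp (4 + 4 * Rabs (ln C)) * h_term kappa mu0 N a i.
Proof.
  intros hi hN hlN hd hdN hs; rewrite !h_term_weight.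
  assert (hx : 1 <= INR i) by (apply (le_INR 1); exact hi).
  assert (hln : 0 <= ln (INR i)) by (rewrite <- ln_1; apply ln_le; lra).
  pose proof (kappa_gt0 i hi) as hk.
  set (X := Rpower (INR i) (1 + 2 * a)); set (E := Rpower (INR i) (2 * d)).
  set (c := / kappa i ^ 2); set (B := exp (4 + 4 * Rabs (ln C))).
  replace (Rpower (INR i) (1 + 2 * (a + d))) with (X * E)
    by (unfold X, E; rewrite <- Rpower_plus; f_equal; ring).
  assert (hX : 0 < X) by apply Rpower_gt0.
  assert (hc : 0 < c) by (apply Rinv_0_lt_compat, pow_lt; lra).
  assert (hE : 1 <= E) by (unfold E; rewrite <- (Rpower_O (INR i)) by lra;
                           apply Rle_Rpower; lra).
  assert (hB : 1 <= B) by (unfold B; rewrite <- exp_0; apply exp_le_compat;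
                           pose proof (Rabs_pos (ln C)); lra).
  set (A := N ^ 2 * mu0 i ^ 2 * ln (INR i)).
  assert (hA : 0 <= A)
    by (apply Rmult_le_pos; [apply Rmult_le_pos; apply pow2_ge_0 | exact hln]).
  assert (hw : 0 <= weight X c N) by (apply weight_ge0; lra).
  rewrite (Rmult_comm B), Rmult_assoc.
  apply Rmult_le_compat_l; [exact hA|].
  destruct (Rle_or_lt N (X * c)) as [hlarge | hsmall].
  - apply Rle_trans with (weight X c N); [apply weight_antitone; nra | nra].
  - apply Rle_trans with (weight X c N * E).
    + replace E with (X * E / X) at 2 by (field; lra).
      apply weight_le_scaled; nra.
    + apply Rmult_le_compat_l; [exact hw|].
      pose proof (ln_index_lt N a i hi hN hsmall).
      pose proof (Rle_abs (ln C)).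
      assert (ln (INR i) < 2 * (ln N + 2 * Rabs (ln C))) by nra.
      unfold E, B, Rpower; apply exp_le_compat.
      assert (d <= 1 / 2) by nra.
      assert (0 <= d * (2 * (ln N + 2 * Rabs (ln C)) - ln (INR i))) by nra.
      assert (0 <= (1 / 2 - d) * Rabs (ln C)) by (pose proof (Rabs_pos (ln C)); nra).
      nra.
Qed.

Lemma h_n_window_le (mu0 : nat -> R) (N a0 a : R) :
  ex_series (fun k => mu0 (S k) ^ 2) -> 0 < N -> 2 <= ln N ->
  1 / 2 <= 1 + 2 * a0 -> a0 <= a <= a0 + 1 / ln N ->
  h_n p kappa mu0 N a <= 3 * exp 8 * exp (4 + 4 * Rabs (ln C)) * h_n p kappa mu0 N a0.
Proof.
  intros hmu hN hlN ha0 [ha0a haa0].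
  set (d := a - a0); set (B := exp (4 + 4 * Rabs (ln C))).
  assert (hd : 0 <= d) by (unfold d; lra).
  assert (hdN : d * ln N <= 1).
  { apply Rmult_le_reg_r with (/ ln N); [apply Rinv_0_lt_compat; lra|].
    replace (d * ln N * / ln N) with d by (field; lra).
    unfold d; lra. }
  assert (hs : 1 / 2 <= 1 + 2 * a0 + 2 * p) by lra.
  assert (hex0 := ex_series_h_term mu0 N a0 hmu hN ltac:(lra)).
  assert (hseries : Series (fun k => h_term kappa mu0 N a (S k))
                    <= B * Series (fun k => h_term kappa mu0 N a0 (S k))).
  { rewrite <- Series_scal_l; apply Series_le.
    - intro k; split; [apply h_term_ge0; lia || lra|].
      replace a with (a0 + d) by (unfold d; ring).
      apply h_term_shift_le; lia || lra.
    - exact (@ex_series_scal_l R_AbsRing R_NormedModule _ _ hex0). }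
  assert (hprefactor : prefactor N (1 + 2 * a + 2 * p)
                       <= 3 * exp 8 * prefactor N (1 + 2 * a0 + 2 * p)).
  { replace (1 + 2 * a + 2 * p) with (1 + 2 * a0 + 2 * p + 2 * d) by (unfold d; ring).
    apply prefactor_shift_le; lra. }
  assert (0 <= Series (fun k => h_term kappa mu0 N a0 (S k)))
    by (apply Series_ge0; [intro; apply h_term_ge0; lia || lra | exact hex0]).
  assert (0 <= prefactor N (1 + 2 * a + 2 * p)).
  { apply Rdiv_le_0_compat; [lra | apply Rmult_lt_0_compat; [apply Rpower_gt0 | lra]]. }
  assert (0 < B) by apply exp_pos.
  rewrite !h_n_prefactor.
  apply Rle_trans with (prefactor N (1 + 2 * a + 2 * p)
                        * (B * Series (fun k => h_term kappa mu0 N a0 (S k)))).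
  - apply Rmult_le_compat_l; assumption.
  - replace (3 * exp 8 * B * (prefactor N (1 + 2 * a0 + 2 * p)
                                * Series (fun k => h_term kappa mu0 N a0 (S k))))
      with (3 * exp 8 * prefactor N (1 + 2 * a0 + 2 * p)
            * (B * Series (fun k => h_term kappa mu0 N a0 (S k)))) by ring.
    apply Rmult_le_compat_r; [nra | exact hprefactor].
Qed.

End Kappa.

Lemma Glb_Rbar_pos_ge0 (P : R -> Prop) :
  Rbar_le (Finite 0) (Glb_Rbar (fun a => 0 < a /\ P a)).
Proof.
  apply (proj2 (Glb_Rbar_correct _)); intros x [hx _]; simpl; lra.
Qed.

Lemma alpha_up_ge0 (p : R) (kappa mu0 : nat -> R) (L N abar : R) :
  alpha_up p kappa mu0 L N = Finite abar -> 0 <= abar.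
Proof.
  intros habar.
  pose proof (Glb_Rbar_pos_ge0 (fun a => h_n p kappa mu0 N a > L * ln N ^ 2)) as hglb.
  change (Rbar_le (Finite 0) (alpha_up p kappa mu0 L N)) in hglb.
  now rewrite habar in hglb.
Qed.

Lemma alpha_low_ge0 (p : R) (kappa mu0 : nat -> R) (l N : R) :
  0 <= alpha_low p kappa mu0 l N.
Proof.
  unfold alpha_low.
  pose proof (Glb_Rbar_pos_ge0 (fun a => h_n p kappa mu0 N a > l)) as hglb.
  pose proof (sqrt_pos (ln N)).
  destruct (Glb_Rbar _) as [g | |]; simpl in hglb |- *; try contradiction; try lra.
  apply Rmin_glb; lra.
Qed.

Lemma ln_ge_of_exp_le (k N : R) : exp k <= N -> k <= ln N.
Proof. intros h; rewrite <- (ln_exp k); apply ln_le; [apply exp_pos | exact h]. Qed.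

Theorem lemma5p1
  (p C : R) (kappa : nat -> R) (l L : R)
  (hp : 0 <= p) (hC : 0 < C)
  (hkappa : forall i : nat, (1 <= i)%nat ->
     / C * Rpower (INR i) (- p) <= kappa i <= C * Rpower (INR i) (- p))
  (hl : 0 < l) (hlL : l < L) :
  exists K : R, 0 < K /\
  forall mu0 : nat -> R,
    ex_series (fun k => (mu0 (S k)) ^ 2) ->
    forall n : nat,
      (exp 4 <= INR n ->
        forall abar : R, alpha_up p kappa mu0 L (INR n) = Finite abar ->
        forall alpha : R, abar - 1 / ln (INR n) <= alpha <= abar ->
          h_n p kappa mu0 (INR n) abar
            <= K * h_n p kappa mu0 (INR n) alpha) /\
      (exp 2 <= INR n ->
        forall alpha : R,
          alpha_low p kappa mu0 l (INR n) <= alpha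
            <= alpha_low p kappa mu0 l (INR n) + 1 / ln (INR n) ->
          h_n p kappa mu0 (INR n) alpha
            <= K * h_n p kappa mu0 (INR n) (alpha_low p kappa mu0 l (INR n))).
Proof.
  exists (3 * exp 8 * exp (4 + 4 * Rabs (ln C))); split.
  { pose proof (exp_pos 8); pose proof (exp_pos (4 + 4 * Rabs (ln C))); nra. }
  intros mu0 hmu n; split.
  - intros hn abar habar alpha [hlo hhi].
    pose proof (exp_pos 4); pose proof (ln_ge_of_exp_le 4 _ hn).
    pose proof (alpha_up_ge0 _ _ _ _ _ _ habar).
    assert (1 / ln (INR n) <= 1 / 4) by (apply Rmult_le_compat_l, Rinv_le_contravar; lra).
    apply (h_n_window_le p C); try assumption; lra.
  - intros hn alpha halpha.
    pose proof (exp_pos 2); pose proof (ln_ge_of_exp_le 2 _ hn).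
    pose proof (alpha_low_ge0 p kappa mu0 l (INR n)).
    apply (h_n_window_le p C); try assumption; lra.
Qed.
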